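(* Let $A\in\mathbb{R}^{m\times n}$, $b\in\mathbb{R}^m$, $\delta\ge0$ with $\{x:\|Ax-b\|\le\delta\}\neq\emptyset$. Run the exact penalty decomposition method described in the context with any $\epsilon>0$, $\sigma>1$, $\rho_0>0$. Then for each $k$ for which $v^k$ is generated, the subproblem $$\min_{x\in\mathbb{R}^n}\{\langle v^k,|x|\rangle:\ \|Ax-b\|\le\delta\}$$ has an optimal solution.
   Context: Exact penalty decomposition method: (S.0) Given a tolerance $\epsilon>0$ and a ratio $\sigma>1$, choose $\rho_0>0$, set $v^0=e$ (the all-ones vector in $\mathbb{R}^n$) and $k:=0$. (S.1) Choose $x^{k+1}\in\arg\min_{x\in\mathbb{R}^n}\{\langle v^k,|x|\rangle:\ \|Ax-b\|\le\delta\}$. (S.2) For each $i$, set $v^{k+1}_i=0$ if $|x^{k+1}_i|>1/\rho_k$ and $v^{k+1}_i=1$ otherwise. (S.3) If $\langle v^{k+1},|x^{k+1}|\rangle\le\epsilon$, stop; otherwise go to (S.4). (S.4) Set $\rho_{k+1}=\sigma\rho_k$, $k:=k+1$, and go to (S.1). Here $\|\cdot\|$ is the Euclidean norm and $|x|$ the componentwise absolute value. *)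

From mathcomp Require Import all_boot all_order all_algebra.
From mathcomp Require Import reals.
Set Implicit Arguments. Unset Strict Implicit. Unset Printing Implicit Defensive.
Import Order.TTheory GRing.Theory Num.Theory.
Local Open Scope ring_scope.

Section EPD.
Variable R : realType.

Definition enorm (m : nat) (y : 'cV[R]_m) : R := Num.sqrt (\sum_(i < m) (y i 0) ^+ 2).

Definition wl1 (n : nat) (v x : 'cV[R]_n) : R := \sum_(i < n) v i 0 * `|x i 0|.

Definition feasible (m n : nat) (A : 'M[R]_(m, n)) (b : 'cV[R]_m) (delta : R)
  (x : 'cV[R]_n) : Prop := enorm (A *m x - b) <= delta.

Definition is_subsol (m n : nat) (A : 'M[R]_(m, n)) (b : 'cV[R]_m) (delta : R)
  (v x : 'cV[R]_n) : Prop :=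
  feasible A b delta x /\ forall y, feasible A b delta y -> wl1 v x <= wl1 v y.

Definition thresh_update (n : nat) (rho : R) (x : 'cV[R]_n) : 'cV[R]_n :=
  \col_i (if 1 / rho < `|x i 0| then 0 else 1).

(* The sequences x, v, rho form a run of the exact penalty decomposition
   method in which v^0, ..., v^k have been generated: for every j < k,
   x^{j+1} solves subproblem (S.1) with v^j, v^{j+1} is given by (S.2), and
   if v^{j+1} is not the last generated iterate (j+1 < k) then the stopping
   test (S.3) failed and rho_{j+1} = sigma * rho_j (S.4). *)
Definition epd_run_upto (m n : nat) (A : 'M[R]_(m, n)) (b : 'cV[R]_m) (delta : R)
  (eps sigma rho0 : R) (x v : nat -> 'cV[R]_n) (rho : nat -> R) (k : nat) : Prop :=
  rho 0%N = rho0 /\ v 0%N = const_mx 1 /\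
  forall j : nat, (j < k)%N ->
    is_subsol A b delta (v j) (x j.+1) /\
    v j.+1 = thresh_update (rho j) (x j.+1) /\
    ((j.+1 < k)%N -> eps < wl1 (v j.+1) (x j.+1) /\ rho j.+1 = sigma * rho j).

End EPD.

From mathcomp Require Import all_boot all_order all_algebra.
From mathcomp Require Import reals.
From mathcomp Require Import all_classical all_reals all_analysis.
Import Order.TTheory GRing.Theory Num.Theory.
Import numFieldNormedType.Exports.
Local Open Scope ring_scope.
Local Open Scope classical_set_scope.

(* Since the weights are nonnegative, <w, |x|> = ||W x||_1 with W = diag w, so
   the subproblem only depends on the image y = (A x, W x) of x.  The image of
   the feasible set is the intersection of a linear subspace with the closed set
   {y | ||y_1 - b|| <= delta}; on it, ||y_1|| <= delta + ||b|| and the objective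
   ||y_2||_1 is coercive, so its sublevel sets are compact and Weierstrass'
   theorem yields a minimiser, which lifts back to an optimal x. *)

Section WeightedL1Subproblem.
Set Implicit Arguments.
Unset Strict Implicit.
Variable R : realType.

Lemma continuous_sum (T : topologicalType) (I : Type) (r : seq I)
    (F : I -> T -> R) :
  (forall i, continuous (F i)) -> continuous (fun t => \sum_(i <- r) F i t).
Proof.
by move=> cF; apply: continuous_big => [|i _]; [exact: add_continuous|].
Qed.

Lemma enorm_continuous_comp (T : topologicalType) p (f : T -> 'cV[R]_p) :
  (forall i, continuous (fun t => f t i 0)) -> continuous (fun t => enorm (f t)).
Proof.
move=> cf t; apply: (continuous_comp (g := @Num.sqrt R)); last exact: sqrt_continuous.
apply: continuous_sum => i {}t.
apply: (continuous_comp (f := fun t => f t i 0) (g := fun x : R => x ^+ 2)).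
  exact: cf.
exact: exprn_continuous.
Qed.

Lemma wl1_continuous_comp (T : topologicalType) p (v : 'cV[R]_p)
    (f : T -> 'cV[R]_p) :
  (forall i, continuous (fun t => f t i 0)) -> continuous (fun t => wl1 v (f t)).
Proof.
move=> cf; apply: continuous_sum => i t.
apply: (continuousM (s := cst (v i 0)) (t := fun t => `|f t i 0|)).
  exact: cst_continuous.
apply: (continuous_comp (f := fun t => f t i 0) (g := Num.norm)); first exact: cf.
exact: (@norm_continuous _ R^o).
Qed.

Lemma coord_le_enorm p (y : 'cV[R]_p) i : `|y i 0| <= enorm y.
Proof.
rewrite -sqrtr_sqr; apply: ler_wsqrtr.
by rewrite (bigD1 i) //= lerDl; apply: sumr_ge0 => j _; exact: sqr_ge0.
Qed.

Lemma wl1_ge_term p (v y : 'cV[R]_p) i :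
  (forall j, 0 <= v j 0) -> v i 0 * `|y i 0| <= wl1 v y.
Proof.
move=> v_ge0; rewrite /wl1 (bigD1 i) //= lerDl.
by apply: sumr_ge0 => j _; rewrite mulr_ge0.
Qed.

Lemma wl1_diag p (w z : 'cV[R]_p) :
  (forall i, 0 <= w i 0) -> wl1 (const_mx 1) (diag_mx w^T *m z) = wl1 w z.
Proof.
move=> w_ge0; apply: eq_bigr => i _.
by rewrite mul_diag_mx !mxE mul1r normrM ger0_norm.
Qed.

Lemma closed_row_space p q (M : 'M[R]_(p, q)) :
  closed [set y : 'rV[R]_q | (y <= M)%MS].
Proof.
have -> : [set y : 'rV[R]_q | (y <= M)%MS] =
    \bigcap_(j in [set: 'I_q]) [set y | (y *m cokermx M) 0 j = 0].
  apply/seteqP; split => y /=.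
    by rewrite submxE => /eqP y_ker j _; rewrite /= y_ker mxE.
  move=> y_ker; rewrite submxE; apply/eqP/matrixP => i j.
  by rewrite ord1 [RHS]mxE; exact: y_ker.
apply: closed_bigI => j _.
have ker_coord_cont : continuous (fun y : 'rV[R]_q => (y *m cokermx M) 0 j).
  have -> : (fun y : 'rV[R]_q => (y *m cokermx M) 0 j) =
      (fun y => \sum_i y 0 i * cokermx M i j).
    by apply: funext => y; rewrite mxE.
  apply: continuous_sum => i y.
  apply: (continuousM (s := fun y : 'rV[R]_q => y 0 i)).
    exact: coord_continuous.
  exact: cst_continuous.
exact: (proj1 (continuous_closedP _) ker_coord_cont _ (@closed_eq _ 0)).
Qed.

Lemma bounded_set_coord p q (K : set 'M[R]_(p, q)) (B : R) :
  (forall y, K y -> forall i j, `|y i j| <= B) -> bounded_set K.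
Proof.
move=> K_le; rewrite /bounded_set /= /bounded_near.
near=> M0 => y Ky /=.
have /ltW : Num.max B 0 < M0.
  by near: M0; apply: nbhs_pinfty_gt; exact: num_real.
rewrite ge_max => /andP[B_le M0_ge0].
have -> : `|y| = mx_norm y by []; rewrite mx_normrE.
apply: (big_ind (fun r => r <= M0)) => // [r1 r2 h1 h2|[i j] _].
  by rewrite ge_max h1 h2.
exact: le_trans (K_le y Ky i j) B_le.
Unshelve. all: by end_near.
Qed.

Lemma EVT_min_bounded_sublevel p (S : set 'rV[R]_p) (g : 'rV[R]_p -> R) y0 :
  closed S -> continuous g -> S y0 ->
  bounded_set (S `&` [set y | g y <= g y0]) ->
  exists2 ys, S ys & forall y, S y -> g ys <= g y.
Proof.
move=> S_closed g_cont S_y0 K_bounded.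
set K := S `&` _ in K_bounded.
have K_closed : closed K.
  apply: closedI => //.
  exact: (proj1 (continuous_closedP _) g_cont _ (@closed_le _ (g y0))).
have K_y0 : K !=set0 by exists y0; split => //=.
have [ys] := EVT_min_rV K_y0 (bounded_closed_compact K_bounded K_closed)
  (continuous_subspaceT g_cont).
rewrite inE => -[S_ys g_ys] ys_min; exists ys => // y S_y.
have [gy_le|gy_gt] := leP (g y) (g y0).
  by apply: ys_min; rewrite inE.
exact: le_trans g_ys (ltW gy_gt).
Qed.

Theorem wl1_subproblem_solvable m n (A : 'M[R]_(m, n)) (b : 'cV[R]_m)
    (delta : R) (w : 'cV[R]_n) :
  (forall i, 0 <= w i 0) -> (exists x0, feasible A b delta x0) ->
  exists xs, is_subsol A b delta w xs.
Proof.
move=> w_ge0 [x0 x0_feas].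
pose M := row_mx A^T (diag_mx w^T).
pose fit (y : 'rV[R]_(m + n)) := enorm ((lsubmx y)^T - b).
pose pen (y : 'rV[R]_(m + n)) := wl1 (const_mx 1) (rsubmx y)^T.
pose S := [set y | (y <= M)%MS] `&` [set y | fit y <= delta].
have fitE z : fit (z^T *m M) = enorm (A *m z - b).
  by rewrite /fit mul_mx_row row_mxKl -trmx_mul trmxK.
have penE z : pen (z^T *m M) = wl1 w z.
  by rewrite /pen mul_mx_row row_mxKr trmx_mul tr_diag_mx trmxK wl1_diag.
have S_image z : feasible A b delta z -> S (z^T *m M).
  by move=> z_feas; split => /=; [exact: submxMl | rewrite fitE].
have fit_cont : continuous fit.
  apply: enorm_continuous_comp => i.
  have -> : (fun y : 'rV[R]_(m + n) => ((lsubmx y)^T - b) i 0) =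
      (fun y => y 0 (lshift n i) - b i 0).
    by apply: funext => y; rewrite !mxE.
  move=> y; apply: continuousB; first exact: coord_continuous.
  exact: cst_continuous.
have pen_cont : continuous pen.
  apply: wl1_continuous_comp => i.
  have -> : (fun y : 'rV[R]_(m + n) => (rsubmx y)^T i 0) =
      (fun y => y 0 (rshift m i)).
    by apply: funext => y; rewrite !mxE.
  exact: coord_continuous.
have S_closed : closed S.
  apply: closedI; first exact: closed_row_space.
  exact: (proj1 (continuous_closedP _) fit_cont _ (@closed_le _ delta)).
pose c := pen (x0^T *m M).
have sublevel_bounded : bounded_set (S `&` [set y | pen y <= c]).
  apply: (@bounded_set_coord _ _ _ (delta + enorm b + c)).
  move=> y [[_ /= fit_y] /= pen_y] i j.
  have fit_ge0 : 0 <= delta + enorm b.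
    by rewrite addr_ge0 ?sqrtr_ge0 //; apply: le_trans fit_y; exact: sqrtr_ge0.
  have c_ge0 : 0 <= c by apply: sumr_ge0 => l _; rewrite mxE mul1r.
  rewrite ord1 -(fintype.splitK j); case: (fintype.split j) => l /=.
  - have y_l : y 0 (lshift n l) = ((lsubmx y)^T - b) l 0 + b l 0.
      by rewrite !mxE subrK.
    rewrite y_l (le_trans (ler_normD _ _)) //.
    apply: (@le_trans _ _ (delta + enorm b)); last by rewrite lerDl.
    rewrite lerD ?coord_le_enorm //.
    exact: le_trans (coord_le_enorm _ _) fit_y.
  - have y_l : `|y 0 (rshift m l)| <= pen y.
      have := @wl1_ge_term _ (const_mx 1) (rsubmx y)^T l.
      by rewrite !mxE mul1r; apply=> k; rewrite mxE.
    by rewrite (le_trans y_l) // (le_trans pen_y) // lerDr.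
have [ys [ys_row ys_fit] ys_min] := EVT_min_bounded_sublevel
  S_closed pen_cont (S_image x0 x0_feas) sublevel_bounded.
have ysE : ((ys *m pinvmx M)^T)^T *m M = ys by rewrite trmxK mulmxKpV.
exists (ys *m pinvmx M)^T; split; first by rewrite /feasible -fitE ysE.
by move=> y y_feas; rewrite -!penE ysE; exact: ys_min (S_image y y_feas).
Qed.

Lemma thresh_update_ge0 n (rho : R) (x : 'cV[R]_n) i :
  0 <= thresh_update rho x i 0.
Proof. by rewrite mxE; case: ifP. Qed.

Lemma epd_run_weights_ge0 m n (A : 'M[R]_(m, n)) (b : 'cV[R]_m) (delta : R)
    (eps sigma rho0 : R) (x v : nat -> 'cV[R]_n) (rho : nat -> R) (k : nat) :
  epd_run_upto A b delta eps sigma rho0 x v rho k -> forall i, 0 <= v k i 0.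
Proof.
case: k => [|k] [_ [v0 run]] i; first by rewrite v0 mxE.
by have [_ [-> _]] := run k (ltnSn k); exact: thresh_update_ge0.
Qed.

End WeightedL1Subproblem.

Theorem lemma3p3 (R : realType) (m n : nat) (A : 'M[R]_(m, n)) (b : 'cV[R]_m)
  (delta : R) (hdelta : 0 <= delta)
  (hfeas : exists x0 : 'cV[R]_n, feasible A b delta x0)
  (eps sigma rho0 : R) (heps : 0 < eps) (hsigma : 1 < sigma) (hrho0 : 0 < rho0)
  (x v : nat -> 'cV[R]_n) (rho : nat -> R) (k : nat) :
  epd_run_upto A b delta eps sigma rho0 x v rho k ->
  exists xs : 'cV[R]_n, is_subsol A b delta (v k) xs.
Proof.
move=> run; apply: wl1_subproblem_solvable hfeas.
exact: epd_run_weights_ge0 run.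
Qed.
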